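(* Let $\alpha\in\Delta_+$, and let $r,s,k\in\mathbb{Z}_{>0}$ and $K\in\mathbb{Z}_{\ge0}$ satisfy $r+s\ge kr+K$. Then, in $U(\mathfrak{sl}_{2,\alpha}[t])$, \[\big[e_\alpha,\ {}_kf_\alpha(r,s)\big]\in \sum_{(r',s')}U\big(t\,\mathfrak{sl}_{2,\alpha}[t]\big)\,{}_kf_\alpha(r',s')+U\big(t\,\mathfrak{sl}_{2,\alpha}[t]\big)\,t\mathfrak{b}_\alpha[t],\] where the sum runs over all pairs $r',s'\in\mathbb{Z}_{>0}$ with $r'+s'\ge kr'+K$.
   Context: $\mathfrak g=\mathfrak{sl}_{n+1}(\mathbb C)$, positive roots $\Delta_+$; for $\alpha\in\Delta_+$, $e_\alpha,f_\alpha$ are root vectors with $[e_\alpha,f_\alpha]=h_\alpha$ the coroot. $\mathfrak{sl}_{2,\alpha}=\mathbb{C}e_\alpha\oplus\mathbb{C}h_\alpha\oplus\mathbb{C}f_\alpha$, $\mathfrak{b}_\alpha=\mathbb{C}e_\alpha\oplus\mathbb{C}h_\alpha$. For a Lie algebra $\mathfrak a$, $\mathfrak a[t]=\mathfrak a\otimes\mathbb C[t]$ with bracket $[x\otimes f,y\otimes g]=[x,y]\otimes fg$, and $t\mathfrak a[t]=\mathfrak a\otimes t\mathbb C[t]$; $e_\alpha$ denotes $e_\alpha\otimes 1$. For $X$ in a Lie algebra, $X^{(b)}=X^b/b!$. For $r,s\in\mathbb{Z}_{\ge0}$ let $\mathbf{S}(r,s)=\{(b_j)_{j\ge0}: b_j\in\mathbb{Z}_{\ge0},\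 \sum_j b_j=r,\ \sum_j jb_j=s\}$, and for $k\in\mathbb Z_{\ge0}$ let ${}_k\mathbf{S}(r,s)$ be the subset with $b_j=0$ for all $j<k$. For $x\in\mathfrak g$ define ${}_kx(r,s)=\sum_{(b_j)\in{}_k\mathbf{S}(r,s)}(x\otimes t^k)^{(b_k)}(x\otimes t^{k+1})^{(b_{k+1})}\cdots(x\otimes t^s)^{(b_s)}\in U(\mathfrak g[t])$ (zero if the index set is empty). *)

From HB Require Import structures.
From mathcomp Require Import all_boot all_order all_algebra all_field.
Set Implicit Arguments. Unset Strict Implicit. Unset Printing Implicit Defensive.
Import Order.TTheory GRing.Theory Num.Theory.
Local Open Scope ring_scope.

Definition divpow (A : algType algC) (X : A) (b : nat) : A :=
  (b`!%:R : algC)^-1 *: X ^+ b.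

(* The index set  _k S(r,s)  : sequences (b_j)_{j>=0} with sum r, weighted sum s,
   b_j = 0 for j < k.  For j > s one necessarily has b_j = 0 (as j >= 1), and
   b_j <= r, so such sequences are exactly the finite functions below. *)
Definition kS (k r s : nat) (b : {ffun 'I_s.+1 -> 'I_r.+1}) : bool :=
  [&& (\sum_(j < s.+1) (b j : nat))%N == r,
      (\sum_(j < s.+1) (j * b j)%N)%N == s &
      [forall j : 'I_s.+1, (j < k)%N ==> ((b j : nat) == 0%N)]].

Arguments kS k r s b : clear implicits.

(* _k x(r,s), where x j stands for the image of x (x) t^j. *)
Definition kx (A : algType algC) (x : nat -> A) (k r s : nat) : A :=
  \sum_(b : {ffun 'I_s.+1 -> 'I_r.+1} | kS k r s b)
     \prod_(k <= j < s.+1) divpow (x j) (b (inord j) : nat).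

(* Relations of sl_2[t] on the images e m, h m, f m of e(x)t^m, h(x)t^m, f(x)t^m:
   i.e. the linear extension is a Lie algebra map sl_2[t] -> A (A with commutator). *)
Definition sl2_current_rels (A : algType algC) (e h f : nat -> A) : Prop :=
  forall m n : nat,
  e m * f n - f n * e m = h (m + n)%N /\
  h m * e n - e n * h m = e (m + n)%N *+ 2 /\
  h m * f n - f n * h m = - (f (m + n)%N *+ 2) /\
  e m * e n = e n * e m /\
  f m * f n = f n * f m /\
  h m * h n = h n * h m.

(* Image of U(t sl_2[t]) in A: the unital subalgebra generated by x(x)t^m, m >= 1. *)
Inductive Uplus (A : algType algC) (e h f : nat -> A) : A -> Prop :=
| Uplus1 : Uplus e h f 1
| Uplus_e m : (0 < m)%N -> Uplus e h f (e m)
| Uplus_h m : (0 < m)%N -> Uplus e h f (h m)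
| Uplus_f m : (0 < m)%N -> Uplus e h f (f m)
| Uplus_add u v : Uplus e h f u -> Uplus e h f v -> Uplus e h f (u + v)
| Uplus_scale (c : algC) u : Uplus e h f u -> Uplus e h f (c *: u)
| Uplus_mul u v : Uplus e h f u -> Uplus e h f v -> Uplus e h f (u * v).

(* The subspace  sum_{(r',s')} U(t sl2[t]) _kf(r',s') + U(t sl2[t]) t b[t],
   (r',s' > 0, r'+s' >= k r' + K), with t b[t] spanned by e(x)t^m, h(x)t^m, m >= 1. *)
Inductive target (A : algType algC) (e h f : nat -> A) (k K : nat) : A -> Prop :=
| target0 : target e h f k K 0
| target_add x y : target e h f k K x -> target e h f k K y -> target e h f k K (x + y)
| target_scale (c : algC) x : target e h f k K x -> target e h f k K (c *: x)
| target_kf u r' s' : Uplus e h f u -> (0 < r')%N -> (0 < s')%N ->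
    (k * r' + K <= r' + s')%N -> target e h f k K (u * kx f k r' s')
| target_e u m : Uplus e h f u -> (0 < m)%N -> target e h f k K (u * e m)
| target_h u m : Uplus e h f u -> (0 < m)%N -> target e h f k K (u * h m).

From HB Require Import structures.
From mathcomp Require Import all_boot all_order all_algebra all_field.
From mathcomp Require Import zify.
Set Implicit Arguments.
Unset Strict Implicit.
Import GRing.Theory.
Local Open Scope ring_scope.

(* As the [f j] commute, [r`! *: kx f k r s] is the sum [kf_ord r s] of the products
   [f j_1 * ... * f j_r] over the ordered compositions [s = j_1 + ... + j_r] with all
   [j_i >= k], which satisfies [kf_ord r.+1 s = \sum_(j >= k) f j * kf_ord r (s - j)].
   Commuting [e 0] through this recursion with [[e 0, f j] = h j] and
   [[h j, f l] = - 2 f (j + l)] gives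
     [[e 0, kf_ord r s] = r \sum_j kf_ord r.-1 (s - j) * h j
                           - r (r - 1) \sum_(j, l >= k) f (j + l) * kf_ord r.-2 (s - j - l)].
   The first sum lies in [U(t sl2[t]) t b[t]]. Collecting the second by [m = j + l] and
   using the Euler identity [s kf_ord r.+1 s = r.+1 \sum_m m f m * kf_ord r (s - m)]
   leaves a multiple of [kf_ord r.-1 s] plus terms [f m * kf_ord r.-2 (s - m)] with
   [m <= k.*2 - 2]; since [k > 0] both satisfy the degree bound. *)

Section TriangularSums.
Variables (V : nmodType) (k : nat).

Lemma big_triangle_square s (F : nat -> nat -> V) :
  \sum_(j < s.+1 | (k <= j)%N) \sum_(l < (s - j).+1 | (k <= l)%N) F j l =
  \sum_(j < s.+1) \sum_(l < s.+1)
     (if [&& (k <= j)%N, (k <= l)%N & (j + l <= s)%N] then F j l else 0).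
Proof.
rewrite big_mkcond; apply: eq_bigr => j _.
have js := ltn_ord j.
case: ifP => kj /=; last by rewrite big1.
rewrite (@big_ord_widen_cond _ _ _ _ s.+1); last lia.
rewrite big_mkcond; apply: eq_bigr => l _.
by have -> : ((k <= l) && (l < (s - j).+1))%N = ((k <= l) && (j + l <= s))%N by lia.
Qed.

Lemma exchange_big_triangle s (F : nat -> nat -> V) :
  \sum_(j < s.+1 | (k <= j)%N) \sum_(l < (s - j).+1 | (k <= l)%N) F j l =
  \sum_(l < s.+1 | (k <= l)%N) \sum_(j < (s - l).+1 | (k <= j)%N) F j l.
Proof.
rewrite big_triangle_square (big_triangle_square s (fun l j => F j l)) exchange_big.
by apply: eq_bigr => l _; apply: eq_bigr => j _; rewrite addnC andbCA.
Qed.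

Lemma big_shift_geq n a (G : nat -> V) :
  \sum_(l < n | (k <= l)%N) G (a + l)%N = \sum_(m < a + n | (a + k <= m)%N) G m.
Proof.
elim: n => [|n IH].
  by rewrite big_ord0 addn0 big1 // => m; have := ltn_ord m; lia.
rewrite big_mkcond big_ord_recr /= -big_mkcond IH addnS.
by rewrite [RHS]big_mkcond big_ord_recr /= -big_mkcond leq_add2l.
Qed.

Lemma sumr_const_window n m (x : V) :
  \sum_(j < n | (k <= j)%N && (j + k <= m)%N) x = x *+ (minn n (m.+1 - k) - k).
Proof.
elim: n => [|n IH]; first by rewrite big_ord0 min0n sub0n mulr0n.
rewrite big_mkcond big_ord_recr /= -big_mkcond IH.
by case: ifP => H; [rewrite -mulrSr | rewrite addr0]; congr (_ *+ _); lia.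
Qed.

(* [m.+1 - k.*2] (truncated) is the number of pairs [j, l >= k] with [j + l = m]. *)
Lemma big_triangle_antidiagonal s (G : nat -> V) :
  \sum_(j < s.+1 | (k <= j)%N) \sum_(l < (s - j).+1 | (k <= l)%N) G (j + l)%N =
  \sum_(m < s.+1) G m *+ (m.+1 - k.*2).
Proof.
rewrite (eq_bigr (fun j : 'I_s.+1 => \sum_(m < s.+1 | (j + k <= m)%N) G m)); last first.
  move=> j _; rewrite big_shift_geq.
  by rewrite (_ : (j + (s - j).+1 = s.+1)%N) //; have := ltn_ord j; lia.
rewrite (exchange_big_dep predT) //=; apply: eq_bigr => m _.
rewrite (eq_bigl (fun j : 'I_s.+1 => (k <= j)%N && (j + k <= m)%N)); last first.
  by move=> j /=; rewrite (addnC j).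
by rewrite sumr_const_window; congr (_ *+ _); have := ltn_ord m; lia.
Qed.

End TriangularSums.

Lemma sum_nat_update N (j : 'I_N) (g g' : 'I_N -> nat) :
  (forall i, i != j -> g' i = g i) -> (\sum_i g' i + g j = \sum_i g i + g' j)%N.
Proof.
move=> gg'; rewrite (bigD1 j) //= [(\sum_i g i)%N](bigD1 j) //=.
rewrite (eq_bigr g) => [|i /gg' //]; lia.
Qed.

Lemma commutatorMr (R : pzRingType) (a b c : R) :
  a * (b * c) - (b * c) * a = (a * b - b * a) * c + b * (a * c - c * a).
Proof. by rewrite mulrBl mulrBr !mulrA addrA subrK. Qed.

Lemma big_rem_commr (R : pzRingType) (I : eqType) (r : seq I) (F : I -> R) j :
  uniq r -> j \in r -> (forall a b, GRing.comm (F a) (F b)) ->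
  \prod_(i <- r) F i = F j * \prod_(i <- r | i != j) F i.
Proof.
elim: r => // x r IH /= /andP[xr ur]; rewrite inE => /orP[/eqP ->|jr] FC.
  rewrite !big_cons eqxx /=; congr (_ * _).
  rewrite big_seq [RHS]big_seq_cond; apply: eq_bigl => i.
  by case: (boolP (i \in r)) => //= ir; apply/esym/eqP => xi; rewrite -xi ir in xr.
have xj : x != j by apply/eqP => xj; rewrite xj jr in xr.
by rewrite !big_cons xj (IH ur jr FC) !mulrA FC.
Qed.

Section DividedPowers.
Variable A : algType algC.

Lemma divpow0 (x : A) : divpow x 0 = 1.
Proof. by rewrite /divpow fact0 invr1 expr0 scale1r. Qed.

Lemma mulr_divpowS (x : A) n : x * divpow x n = n.+1%:R *: divpow x n.+1.
Proof.
rewrite /divpow -scalerAr -exprS scalerA; congr (_ *: _).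
by rewrite factS natrM invfM mulrA mulfV ?mul1r // Num.Theory.pnatr_eq0.
Qed.

Lemma commr_divpow (x y : A) m n :
  GRing.comm x y -> GRing.comm (divpow x m) (divpow y n).
Proof.
move=> cxy; rewrite /GRing.comm /divpow -!scalerAl -!scalerAr !scalerA mulrC.
by congr (_ *: _); apply/commrX/commr_sym/commrX/commr_sym.
Qed.

End DividedPowers.

Section OrderedProducts.
Variables (A : algType algC) (f : nat -> A) (k : nat).
Hypothesis f_comm : forall m n, GRing.comm (f m) (f n).

Fixpoint kf_ord (r s : nat) : A :=
  if r is r'.+1 then \sum_(j < s.+1 | (k <= j)%N) f j * kf_ord r' (s - j)
  else (s == 0)%:R.

Definition kf_pairs (r s : nat) : A :=
  \sum_(j < s.+1 | (k <= j)%N) \sum_(l < (s - j).+1 | (k <= l)%N)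
     f (j + l) * kf_ord r (s - j - l).

Definition kf_weighted (r s : nat) : A :=
  \sum_(m < s.+1 | (k <= m)%N) (f m * kf_ord r (s - m)) *+ m.

Lemma kf_ord1 s : (k <= s)%N -> kf_ord 1 s = f s.
Proof.
move=> ks; rewrite /= (bigD1 ord_max) //= subnn mulr1 big1 ?addr0 // => i /andP[_ ni].
have /negbTE -> : (s - i != 0)%N.
  by move: ni; rewrite -(inj_eq val_inj) /=; have := ltn_ord i; lia.
by rewrite mulr0.
Qed.

Lemma kf_ordS0 r : (0 < k)%N -> kf_ord r.+1 0 = 0.
Proof. by move=> k_gt0; rewrite /= big1 // => i ki; have := ltn_ord i; lia. Qed.

Lemma kf_ord_convolutionl (G : nat -> A) r s :
  (forall j l, GRing.comm (f j) (G l)) ->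
  \sum_(j < s.+1 | (k <= j)%N) f j * \sum_(l < (s - j).+1 | (k <= l)%N) G l * kf_ord r (s - j - l)
  = \sum_(l < s.+1 | (k <= l)%N) G l * kf_ord r.+1 (s - l).
Proof.
move=> fG; under eq_bigr => j _ do rewrite mulr_sumr.
rewrite (exchange_big_triangle k s (fun j l => f j * (G l * kf_ord r (s - j - l)))).
apply: eq_bigr => l _ /=; rewrite mulr_sumr; apply: eq_bigr => j _.
by rewrite mulrA fG -mulrA subnAC.
Qed.

Lemma kf_ord_convolutionr (H : nat -> A) r s :
  \sum_(j < s.+1 | (k <= j)%N) f j * \sum_(l < (s - j).+1 | (k <= l)%N) kf_ord r (s - j - l) * H l
  = \sum_(l < s.+1 | (k <= l)%N) kf_ord r.+1 (s - l) * H l.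
Proof.
under eq_bigr => j _ do rewrite mulr_sumr.
rewrite (exchange_big_triangle k s (fun j l => f j * (kf_ord r (s - j - l) * H l))).
apply: eq_bigr => l _ /=; rewrite mulr_suml; apply: eq_bigr => j _.
by rewrite mulrA subnAC.
Qed.

Lemma kf_pairsS r s :
  \sum_(j < s.+1 | (k <= j)%N) f j * kf_pairs r (s - j) = kf_pairs r.+1 s.
Proof.
under eq_bigr => j _ do rewrite /kf_pairs mulr_sumr.
rewrite (exchange_big_triangle k s (fun j a => f j * \sum_(l < (s - j - a).+1 | (k <= l)%N)
     f (a + l) * kf_ord r (s - j - a - l))).
apply: eq_bigr => a _ /=.
under eq_bigr => j _ do rewrite (subnAC s j a).
by rewrite (kf_ord_convolutionl (G := fun l => f (a + l))).
Qed.

Lemma kf_weightedS r s :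
  \sum_(j < s.+1 | (k <= j)%N) f j * kf_weighted r (s - j) = kf_weighted r.+1 s.
Proof.
under eq_bigr => j _ do rewrite /kf_weighted mulr_sumr.
rewrite (exchange_big_triangle k s (fun j m => f j * (f m * kf_ord r (s - j - m) *+ m))).
apply: eq_bigr => m _ /=; rewrite mulr_sumr -sumrMnl; apply: eq_bigr => j _.
by rewrite mulrnAr mulrA f_comm -mulrA subnAC.
Qed.

(* Each composition of [s] into [r.+1] parts contributes [s] = the sum of its parts. *)
Lemma kf_ord_euler r s : kf_ord r.+1 s *+ s = kf_weighted r s *+ r.+1.
Proof.
elim: r s => [|r IH] s.
  rewrite /= -sumrMnl mulr1n; apply: eq_bigr => j _.
  have := ltn_ord j => js.
  have [sj|sj] := eqVneq (s - j)%N 0%N; last by rewrite /= (negbTE sj) mulr0 !mul0rn.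
  by rewrite /= sj; congr (_ *+ _); lia.
rewrite [kf_ord r.+2 s]/= -sumrMnl.
have -> : \sum_(i < s.+1 | (k <= i)%N) f i * kf_ord r.+1 (s - i) *+ s =
    \sum_(i < s.+1 | (k <= i)%N)
      (f i * kf_ord r.+1 (s - i) *+ i + f i * (kf_ord r.+1 (s - i) *+ (s - i))).
  apply: eq_bigr => i _; rewrite mulrnAr -mulrnDr.
  by congr (_ *+ _); have := ltn_ord i; lia.
rewrite big_split /=.
under [X in _ + X = _]eq_bigr => i _ do rewrite IH mulrnAr.
by rewrite sumrMnl kf_weightedS [RHS]mulrS.
Qed.

Lemma kf_weightedE r s : kf_weighted r s = (s%:R / r.+1%:R) *: kf_ord r.+1 s.
Proof.
rewrite mulrC -scalerA scaler_nat kf_ord_euler -scaler_nat scalerA.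
by rewrite mulVf ?scale1r // Num.Theory.pnatr_eq0.
Qed.

(* The truncated coefficient [m.+1 - k.*2] is rewritten as
   [m + 1 - k.*2 + (k.*2 - m.+1)]; the last term vanishes unless [m < k.*2.-1]. *)
Lemma kf_pairsE r s : kf_pairs r s =
  (s%:R / r.+1%:R + 1 - (k.*2)%:R) *: kf_ord r.+1 s +
  \sum_(m < s.+1 | (k <= m)%N) (f m * kf_ord r (s - m)) *+ (k.*2 - m.+1).
Proof.
rewrite /kf_pairs.
under eq_bigr => j _ do under eq_bigr => l _ do rewrite -subnDA.
rewrite (big_triangle_antidiagonal k s (fun m => f m * kf_ord r (s - m))).
rewrite [LHS]big_mkcond /=.
rewrite (eq_bigr (fun m : 'I_s.+1 => if (k <= m)%N then
   (f m * kf_ord r (s - m)) *+ m + f m * kf_ord r (s - m)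
   + (f m * kf_ord r (s - m)) *+ (k.*2 - m.+1) - (f m * kf_ord r (s - m)) *+ k.*2
   else 0)); last first.
  move=> m _; case: ifP => km; last by rewrite (_ : m.+1 - k.*2 = 0)%N ?mulr0n //; lia.
  apply/esym/eqP; rewrite subr_eq -mulrSr -!mulrnDr; apply/eqP; congr (_ *+ _); lia.
rewrite -big_mkcond /= !sumrB !big_split /= sumrMnl.
rewrite -/(kf_weighted r s) kf_weightedE.
set X := \sum_(i < s.+1 | _) f i * kf_ord r (s - i).
change (kf_ord r.+1 s) with X.
set Y := \sum_(i < s.+1 | _) f i * kf_ord r (s - i) *+ _.
by rewrite (addrAC _ Y) -scaler_nat !scalerBl !scalerDl scale1r.
Qed.

(* [kx] with the exponent sequences boxed in ['I_N -> 'I_R.+1] for arbitrary [N] and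
   [R], so that [r] and [s] can vary independently in the recursion on [r]. *)
Section ExponentBoxes.
Variables N R : nat.
Implicit Types b : {ffun 'I_N -> 'I_R.+1}.

Definition kSbox r s b : bool :=
  [&& (\sum_(j < N) (b j : nat))%N == r,
      (\sum_(j < N) (j * b j)%N)%N == s &
      [forall j : 'I_N, (j < k)%N ==> ((b j : nat) == 0%N)]].

Definition fmonomial b : A := \prod_(i < N) divpow (f i) (b i).

Definition kx_box r s : A := \sum_(b | kSbox r s b) fmonomial b.

Definition ffun_incr (j : 'I_N) b : {ffun 'I_N -> 'I_R.+1} :=
  [ffun i => if i == j then inord (b i).+1 else b i].

Definition ffun_decr (j : 'I_N) b : {ffun 'I_N -> 'I_R.+1} :=
  [ffun i => if i == j then inord (b i).-1 else b i].

Lemma kSbox_bound r s b i : kSbox r s b -> (b i <= r)%N /\ (i * b i <= s)%N.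
Proof.
by case/and3P=> /eqP <- /eqP <- _; split; rewrite (bigD1 i) //= leq_addr.
Qed.

Lemma kSbox_support r s b : kSbox r s b ->
  (\sum_(j < N | (k <= j)%N && (j <= s)%N && (0 < b j)%N) b j)%N = r.
Proof.
move=> bS; have /and3P[/eqP <- _ /forallP b_lt_k] := bS.
rewrite big_mkcond; apply: eq_bigr => i _; case: ifP => // i_out.
apply/esym/eqP; rewrite -leqn0 leqNgt; apply/negP => bi.
have [_ ib] := kSbox_bound i bS; have := implyP (b_lt_k i).
by move: i_out; rewrite bi andbT; have := leq_pmulr i bi; case: (ltnP i k); lia.
Qed.

Lemma ffun_incr_at j b : (b j < R)%N -> ffun_incr j b j = (b j).+1 :> nat.
Proof. by move=> bj; rewrite ffunE eqxx inordK. Qed.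

Lemma ffun_incr_max j b : (b j : nat) = R -> ffun_incr j b j = 0%N :> nat.
Proof.
by move=> bj; rewrite ffunE eqxx /inord val_insubd bj ltnn.
Qed.

Lemma ffun_incrK j b : (b j < R)%N -> ffun_decr j (ffun_incr j b) = b.
Proof.
move=> bj; apply/ffunP => i; rewrite ffunE.
case: eqP => [->|/eqP ij]; last by rewrite ffunE (negbTE ij).
by apply: val_inj; rewrite /= ffun_incr_at // inordK // ltnW.
Qed.

Lemma ffun_decrK j b : (0 < b j)%N -> ffun_incr j (ffun_decr j b) = b.
Proof.
move=> bj; apply/ffunP => i; rewrite ffunE.
case: eqP => [->|/eqP ij]; last by rewrite ffunE (negbTE ij).
have bR := ltn_ord (b j); apply: val_inj; rewrite /= ffunE eqxx !inordK ?prednK //; lia.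
Qed.

Lemma kSbox_incr r s (j : 'I_N) b : (0 < r)%N -> (k <= j)%N && (j <= s)%N -> (b j < R)%N ->
  kSbox r s (ffun_incr j b) = kSbox r.-1 (s - j)%N b.
Proof.
move=> r_gt0 /andP[kj js] bj.
have other i : i != j -> (ffun_incr j b i : nat) = b i by rewrite ffunE => /negbTE ->.
have sumE : (\sum_(i < N) (ffun_incr j b i : nat))%N = (\sum_(i < N) (b i : nat)).+1.
  apply: (@addIn (b j)); rewrite addSnnS -(ffun_incr_at bj).
  exact: sum_nat_update.
have wsumE : (\sum_(i < N) (i * ffun_incr j b i))%N = (\sum_(i < N) (i * b i) + j)%N.
  apply: (@addIn (j * b j)%N); rewrite -addnA -mulnS -(ffun_incr_at bj).
  by apply: sum_nat_update => i /other ->.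
rewrite /kSbox sumE wsumE; congr [&& _, _ & _].
- by apply/eqP/eqP; lia.
- by apply/eqP/eqP; lia.
apply: eq_forallb => i; have [->|ij] := eqVneq i j; first by rewrite ltnNge kj.
by rewrite other.
Qed.

Lemma big_ffun_incr r s (j : 'I_N) (G : {ffun 'I_N -> 'I_R.+1} -> A) :
  (0 < r)%N -> (r <= R)%N -> (k <= j)%N && (j <= s)%N ->
  \sum_(b | kSbox r.-1 (s - j)%N b) G (ffun_incr j b) =
  \sum_(b | kSbox r s b && (0 < b j)%N) G b.
Proof.
move=> r_gt0 rR jS; symmetry.
rewrite (reindex_onto (ffun_incr j) (ffun_decr j)); last by move=> b /andP[_ /ffun_decrK].
apply: eq_bigl => b; case: (ltnP (b j) R) => bR.
  by rewrite kSbox_incr // ffun_incr_at // ffun_incrK // eqxx !andbT.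
have bj : (b j : nat) = R by apply/eqP; rewrite eqn_leq bR -ltnS ltn_ord.
rewrite ffun_incr_max // andbF /=; apply/esym/negbTE/negP => /(kSbox_bound j) [bjr _].
by have := leq_trans bR bjr; lia.
Qed.

Lemma fmonomial_incr j b : (b j < R)%N ->
  f j * fmonomial b = (b j).+1%:R *: fmonomial (ffun_incr j b).
Proof.
move=> bj; have fC b' (a c : 'I_N) : GRing.comm (divpow (f a) (b' a)) (divpow (f c) (b' c)).
  exact: commr_divpow.
rewrite /fmonomial !(big_rem_commr (index_enum_uniq _) (mem_index_enum j) (fC _)).
rewrite mulrA mulr_divpowS -scalerAl ffun_incr_at //; congr (_ *: (_ * _)).
by apply: eq_bigr => i ij; rewrite ffunE (negbTE ij).
Qed.

Lemma kx_box_euler r s : (0 < r)%N -> (r <= R)%N ->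
  r%:R *: kx_box r s = \sum_(j < N | (k <= j)%N && (j <= s)%N) f j * kx_box r.-1 (s - j)%N.
Proof.
move=> r_gt0 rR; rewrite /kx_box.
transitivity (\sum_(j < N | (k <= j)%N && (j <= s)%N)
    \sum_(b | kSbox r s b && (0 < b j)%N) (b j)%:R *: fmonomial b); last first.
  apply: eq_bigr => j jS; rewrite mulr_sumr.
  rewrite -(big_ffun_incr (fun b => (b j)%:R *: fmonomial b)) //.
  apply: eq_bigr => b bS; have [bj _] := kSbox_bound j bS.
  by rewrite fmonomial_incr ?ffun_incr_at //; lia.
rewrite (exchange_big_dep (kSbox r s)) /=; last by move=> j b _ /andP[].
rewrite scaler_sumr; apply: eq_bigr => b bS.
rewrite -scaler_suml -natr_sum -{1}(kSbox_support bS).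
by congr (_%:R *: _); apply: eq_bigl => j; rewrite bS.
Qed.

Lemma kx_box0 s : kx_box 0 s = (s == 0)%:R.
Proof.
pose b0 : {ffun 'I_N -> 'I_R.+1} := [ffun _ => ord0].
have b0S : kSbox 0 0 b0.
  apply/and3P; split; first by rewrite big1 // => i _; rewrite ffunE.
    by rewrite big1 // => i _; rewrite ffunE muln0.
  by apply/forallP => i; rewrite ffunE implybT.
have S0 b : kSbox 0 s b = (b == b0) && (s == 0)%N.
  apply/idP/andP => [bS|[/eqP -> /eqP -> //]].
  have b0E : b = b0.
    by apply/ffunP => i; apply: val_inj; have [bi _] := kSbox_bound i bS; rewrite ffunE /=; lia.
  by move: bS; rewrite b0E => /and3P[_ /eqP <- _]; rewrite eqxx big1 // => i _; rewrite ffunE muln0.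
rewrite /kx_box (eq_bigl _ _ S0); case: eqP => _ /=; last by rewrite big_pred0 // => b; rewrite andbF.
rewrite (eq_bigl _ _ (fun b => andbT (b == b0))) big_pred1_eq.
by rewrite /fmonomial big1 // => i _; rewrite ffunE divpow0.
Qed.

Lemma kx_box_kf_ord r s : (r <= R)%N -> (s < N)%N -> r`!%:R *: kx_box r s = kf_ord r s.
Proof.
elim: r s => [|r IH] s rR sN; first by rewrite fact0 scale1r kx_box0.
rewrite factS natrM mulrC -scalerA kx_box_euler //= scaler_sumr.
rewrite [RHS](big_ord_widen_cond N (fun j => (k <= j)%N) (fun j => f j * kf_ord r (s - j))) //.
apply: eq_big => [j|j _]; first by rewrite ltnS.
by rewrite scalerAr IH //; [lia | have := ltn_ord j; lia].
Qed.

End ExponentBoxes.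

Lemma kx_kf_ord r s : r`!%:R *: kx f k r s = kf_ord r s.
Proof.
rewrite -(kx_box_kf_ord (N := s.+1) (R := r)) //; congr (_ *: _).
apply: eq_bigr => b /and3P[_ _ /forallP b_lt_k].
rewrite big_geq_mkord big_mkcond /fmonomial; apply: eq_bigr => i _ /=.
rewrite inord_val; case: ifP => // ki.
by have := b_lt_k i; rewrite ltnNge ki /= => /eqP ->; rewrite divpow0.
Qed.

End OrderedProducts.

Lemma sl2_commf (A : algType algC) (e h f : nat -> A) :
  sl2_current_rels e h f -> forall m n, GRing.comm (f m) (f n).
Proof. by move=> rels m n; have [_ [_ [_ [_ [fmn _]]]]] := rels m n. Qed.

Section Brackets.
Variables (A : algType algC) (e h f : nat -> A) (k : nat).
Hypothesis rels : sl2_current_rels e h f.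
Let f_comm := sl2_commf rels.
Local Notation F := (kf_ord f k).

Lemma lie_e0f n : e 0 * f n - f n * e 0 = h n.
Proof. by have [] := rels 0 n. Qed.

Lemma lie_hf m n : h m * f n - f n * h m = - (f (m + n)%N *+ 2).
Proof. by have [_ [_ []]] := rels m n. Qed.

Lemma lie_h_kf_ord a r s : h a * F r s - F r s * h a =
  - ((\sum_(l < s.+1 | (k <= l)%N) f (a + l)%N * F r.-1 (s - l)) *+ r.*2).
Proof.
elim: r s => [|r IH] s /=; first by rewrite (commr_nat (h a)) subrr mulr0n oppr0.
rewrite mulr_sumr mulr_suml -sumrB.
rewrite (eq_bigr (fun j : 'I_s.+1 => (h a * f j - f j * h a) * F r (s - j) +
  f j * (h a * F r (s - j) - F r (s - j) * h a))); last by move=> j _; rewrite commutatorMr.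
under eq_bigr => j _ do rewrite lie_hf IH mulNr mulrN mulrnAl mulrnAr.
rewrite big_split /= !sumrN !sumrMnl -opprD; congr (- _).
case: r IH => [|r] _; first by rewrite double0 mulr0n addr0.
rewrite (kf_ord_convolutionl k (G := fun l => f (a + l))) // -mulrnDr.
by congr (_ *+ _); lia.
Qed.

Lemma lie_e0_kf_ord r s : e 0 * F r s - F r s * e 0 =
  (\sum_(j < s.+1 | (k <= j)%N) F r.-1 (s - j) * h j) *+ r
  - kf_pairs f k r.-2 s *+ (r * r.-1).
Proof.
elim: r s => [|r IH] s /=; first by rewrite (commr_nat (e 0)) subrr !mulr0n subrr.
rewrite mulr_sumr mulr_suml -sumrB.
rewrite (eq_bigr (fun j : 'I_s.+1 => (e 0 * f j - f j * e 0) * F r (s - j) +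
  f j * (e 0 * F r (s - j) - F r (s - j) * e 0))); last by move=> j _; rewrite commutatorMr.
under eq_bigr => j _ do rewrite lie_e0f IH -[h j * F r (s - j)](subrK (F r (s - j) * h j))
  lie_h_kf_ord mulrBr !mulrnAr.
rewrite !big_split /= !sumrN.
have -> : \sum_(j < s.+1 | (k <= j)%N)
    f j * (\sum_(l < (s - j).+1 | (k <= l)%N) F r.-1 (s - j - l) * h l) *+ r
  = (\sum_(l < s.+1 | (k <= l)%N) F r (s - l) * h l) *+ r.
  by rewrite sumrMnl; case: r {IH} => [|r]; rewrite ?mulr0n ?kf_ord_convolutionr.
have -> : \sum_(j < s.+1 | (k <= j)%N) f j * kf_pairs f k r.-2 (s - j) *+ (r * r.-1)
  = kf_pairs f k r.-1 s *+ (r * r.-1).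
  by rewrite sumrMnl; case: r {IH} => [|[|r]]; rewrite ?muln0 ?mulr0n ?kf_pairsS.
have rearrange (x y : A) m n p :
    - (y *+ m) + x + (x *+ n - y *+ p) = x *+ n.+1 - y *+ (m + p).
  by rewrite mulrS mulrnDr opprD addrACA (addrC (- _)) addrACA (addrC (x *+ n)).
rewrite sumrMnl -/(kf_pairs f k r.-1 s) rearrange.
by congr (_ - _ *+ _); case: r {IH} => [|r] //=; nia.
Qed.

End Brackets.

Section TargetMembership.
Variables (A : algType algC) (e h f : nat -> A) (k K : nat).
Hypothesis rels : sl2_current_rels e h f.
Hypothesis k_gt0 : (0 < k)%N.
Let f_comm := sl2_commf rels.
Local Notation F := (kf_ord f k).
Local Notation U := (Uplus e h f).
Local Notation Tg := (target e h f k K).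

Lemma Uplus0 : U 0.
Proof. by rewrite -(scale0r 1); apply/Uplus_scale/Uplus1. Qed.

Lemma Uplus_nat n : U n%:R.
Proof. by rewrite -scaler_nat; apply/Uplus_scale/Uplus1. Qed.

Lemma Uplus_sum (I : Type) (r : seq I) (P : pred I) (G : I -> A) :
  (forall i, P i -> U (G i)) -> U (\sum_(i <- r | P i) G i).
Proof. by move=> UG; apply: big_ind => //; [exact: Uplus0 | exact: Uplus_add]. Qed.

Lemma Uplus_kf_ord r s : U (F r s).
Proof.
elim: r s => [|r IH] s /=; first exact: Uplus_nat.
apply: Uplus_sum => j kj; apply: Uplus_mul => //.
by apply: Uplus_f; apply: leq_trans kj.
Qed.

Lemma target_sum (I : Type) (r : seq I) (P : pred I) (G : I -> A) :
  (forall i, P i -> Tg (G i)) -> Tg (\sum_(i <- r | P i) G i).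
Proof. by move=> TG; apply: big_ind => //; [exact: target0 | exact: target_add]. Qed.

Lemma target_sub x y : Tg x -> Tg y -> Tg (x - y).
Proof. by move=> Tx Ty; apply: target_add => //; rewrite -scaleN1r; apply: target_scale. Qed.

Lemma target_muln x n : Tg x -> Tg (x *+ n).
Proof. by move=> Tx; rewrite -scaler_nat; apply: target_scale. Qed.

Lemma target_mul_kf_ord u r s : U u -> (0 < r)%N -> (0 < s)%N ->
  (k * r + K <= r + s)%N -> Tg (u * F r s).
Proof.
move=> Uu r_gt0 s_gt0 rsK; rewrite -(kx_kf_ord k f_comm) -scalerAr.
exact/target_scale/target_kf.
Qed.

Lemma target_kf_ord r s : (0 < r)%N -> (0 < s)%N -> (k * r + K <= r + s)%N -> Tg (F r s).
Proof. by rewrite -[F r s]mul1r; apply/target_mul_kf_ord/Uplus1. Qed.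

Lemma target_f_mul_kf_ord m r s : (k <= m <= s)%N -> (k * r + K <= r + (s - m))%N ->
  Tg (f m * F r (s - m)).
Proof.
move=> /andP[km ms] rsK; have m_gt0 : (0 < m)%N by apply: leq_trans km.
case: r rsK => [|r] rsK.
  have [sm|sm] := eqVneq (s - m)%N 0%N; last by rewrite /= (negbTE sm) mulr0; apply: target0.
  by rewrite sm mulr1 -(kf_ord1 f km); apply: target_kf_ord => //; lia.
have [sm|sm] := posnP (s - m)%N; first by rewrite sm kf_ordS0 // mulr0; apply: target0.
by apply: target_mul_kf_ord => //; apply: Uplus_f.
Qed.

Lemma target_kf_pairs r s : (0 < s)%N -> (k * r.+2 + K <= r.+2 + s)%N ->
  Tg (kf_pairs f k r s).
Proof.
move=> s_gt0; rewrite !mulnS => rsK; rewrite kf_pairsE //; apply: target_add.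
  by apply/target_scale/target_kf_ord; rewrite ?mulnS //; lia.
apply: target_sum => m km; have [->|m_lt] := posnP (k.*2 - m.+1)%N.
  by rewrite mulr0n; apply: target0.
by apply/target_muln/target_f_mul_kf_ord; rewrite ?km ?(ltnSE (ltn_ord m)) //; lia.
Qed.

End TargetMembership.

Theorem proposition2p5 (A : algType algC) (e h f : nat -> A)
  (Hrel : sl2_current_rels e h f) (r s k K : nat) :
  (0 < r)%N -> (0 < s)%N -> (0 < k)%N -> (k * r + K <= r + s)%N ->
  target e h f k K (e 0%N * kx f k r s - kx f k r s * e 0%N).
Proof.
move=> r_gt0 s_gt0 k_gt0 rsK.
have kxE : kx f k r s = (r`!%:R)^-1 *: kf_ord f k r s.
  rewrite -(kx_kf_ord k (sl2_commf Hrel)) scalerA mulVf ?scale1r //.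
  by rewrite Num.Theory.pnatr_eq0 -lt0n fact_gt0.
rewrite kxE -scalerAr -scalerAl -scalerBr; apply: target_scale.
rewrite (lie_e0_kf_ord k Hrel); apply: target_sub.
  apply/target_muln/target_sum => j kj.
  exact/target_h/(leq_trans k_gt0 kj)/Uplus_kf_ord.
case: r {kxE} r_gt0 rsK => [//|[|r]] _ rsK; first by rewrite mulr0n; apply: target0.
exact/target_muln/target_kf_pairs.
Qed.
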